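(* Let $\mathbf{L}$ be a distributive lattice, $n\ge1$ an integer and $F$ an upset of $\mathbf{L}$. The following are equivalent: (i) $F$ is a prime $n$-filter; (ii) $F$ is a prime upset which is a union of at most $n$ filters; (iii) $F$ is a union of at most $n$ prime filters; (iv) there is a lattice homomorphism $h\colon\mathbf{L}\to\mathbf{2}^n$ with $F=h^{-1}[P_n]$, where $\mathbf{2}^n$ is the Boolean lattice with $n$ atoms (the $n$-th power of the two-element lattice $0<1$) and $P_n$ is the set of its non-zero elements.
   Context: For a set $X$, $Y\subseteq_n X$ means $Y$ is a non-empty subset of $X$ with $|Y|\le n$. An $n$-filter on a lattice is an upset $F$ such that for every non-empty finite $X\subseteq F$: if $\bigwedge Y\in F$ for every $Y\subseteq_n X$ then $\bigwedge X\in F$. A filter is a $1$-filter, i.e. an upset closed under binary meets (the empty set and the whole lattice count as filters). An upset $F$ is prime if $a\vee b\in F$ implies $a\in F$ or $b\in F$; a prime $n$-filter (prime filter) is an $n$-filter (filter) which is a prime upset. Lattice homomorphisms need not preserve bounds. *)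

From mathcomp Require Import all_boot all_order.
Set Implicit Arguments. Unset Strict Implicit. Unset Printing Implicit Defensive.
Import Order.TTheory.
Local Open Scope order_scope.

Section Defs.
Context {d : Order.disp_t} {L : latticeType d}.

Definition nmeet (x : L) (s : seq L) : L := foldl Order.meet x s.

Definition upset (F : L -> Prop) : Prop :=
  forall a b : L, F a -> a <= b -> F b.

(* n-filter: non-empty finite X = x :: s ⊆ F; Y ⊆_n X is a non-empty
   list y :: t of at most n elements of X. *)
Definition nfilter (n : nat) (F : L -> Prop) : Prop :=
  upset F /\
  forall (x : L) (s : seq L),
    (forall z, z \in x :: s -> F z) ->
    (forall (y : L) (t : seq L), (size (y :: t) <= n)%N ->
        {subset y :: t <= x :: s} -> F (nmeet y t)) ->
    F (nmeet x s).

Definition is_filter (F : L -> Prop) : Prop := nfilter 1 F.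

Definition prime_upset (F : L -> Prop) : Prop :=
  upset F /\ forall a b : L, F (a `|` b) -> F a \/ F b.

Definition prime_nfilter (n : nat) (F : L -> Prop) : Prop :=
  nfilter n F /\ prime_upset F.

Definition prime_filter (F : L -> Prop) : Prop :=
  is_filter F /\ prime_upset F.

Definition union_of (k : nat) (G : 'I_k -> L -> Prop) (F : L -> Prop) : Prop :=
  forall a : L, F a <-> exists i : 'I_k, G i a.

End Defs.

(* The Boolean lattice 2^n with n atoms is represented as the powerset
   lattice {set 'I_n} (meet = :&:, join = :|:, bottom = set0).
   A lattice homomorphism need not preserve bounds. *)
Definition lattice_hom_to_2n {d : Order.disp_t} {L : latticeType d} (n : nat)
  (h : L -> {set 'I_n}) : Prop :=
  forall a b : L, h (Order.meet a b) = h a :&: h b /\ h (Order.join a b) = h a :|: h b.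

Definition P_n (n : nat) : {set 'I_n} -> Prop := fun u => u != set0.

From mathcomp Require Import all_boot all_order boolp.
Set Implicit Arguments. Unset Strict Implicit. Unset Printing Implicit Defensive.
Import Order.TTheory.
Local Open Scope order_scope.

(* (ii) -> (i): if the meet of finitely many elements of F escaped each of
   the k <= n filters, one escaping element per filter would give at most n
   elements whose meet is outside F.
   (i) -> (iii): take a maximal family of elements of F whose pairwise meets
   lie outside F.  It has at most n members, for each member a the set
   {x | x /\ a in F} is a prime filter (maximality gives meet-closure,
   distributivity primality), and maximality again shows that these sets
   cover F.
   (iii) <-> (iv): a family of n prime filters is the same thing as a lattice
   homomorphism into 2^n, sending a to the set of filters containing it. *)

Lemma preimage_subseq (T U : eqType) (f : T -> U) (s : seq T) (t : seq U) :
  {subset t <= map f s} -> exists2 u : seq T, size u = size t & {subset t <= map f u}.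
Proof.
elim: t => [|y t IH] sub; first by exists [::].
have [|u su tu] := IH; first by move=> z zt; apply: sub; rewrite inE zt orbT.
have /mapP [a _ ya] := sub y (mem_head _ _).
exists (a :: u); rewrite /= ?su // => z; rewrite inE.
by case/predU1P => [->|/tu zu]; rewrite /= inE ?ya ?eqxx ?zu ?orbT.
Qed.

Section LatticeFacts.
Context {d : Order.disp_t} {L : latticeType d}.
Implicit Types (F G : L -> Prop) (a b x y z : L) (s t : seq L).

Definition njoin x s : L := foldl Order.join x s.

Lemma le_nmeet b x s : (b <= nmeet x s) = all (fun z => b <= z) (x :: s).
Proof. by rewrite /nmeet; elim: s x => [|w s IH] x /=; rewrite ?andbT // IH /= lexI andbA. Qed.

Lemma nmeet_lb x s z : z \in x :: s -> nmeet x s <= z.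
Proof. by move=> zs; move: (lexx (nmeet x s)); rewrite le_nmeet => /allP; apply. Qed.

Lemma njoin_le b x s : (njoin x s <= b) = all (fun z => z <= b) (x :: s).
Proof. by rewrite /njoin; elim: s x => [|w s IH] x /=; rewrite ?andbT // IH /= leUx andbA. Qed.

Lemma njoin_ub x s z : z \in x :: s -> z <= njoin x s.
Proof. by move=> zs; move: (lexx (njoin x s)); rewrite njoin_le => /allP; apply. Qed.

Lemma meet_closed_nmeet G x s :
  (forall a b, G a -> G b -> G (a `&` b)) ->
  (forall z, z \in x :: s -> G z) -> G (nmeet x s).
Proof.
rewrite /nmeet => GI; elim: s x => [|w s IH] x Gs /=; first exact/Gs/mem_head.
apply: IH => z; rewrite inE => /predU1P [->|zs]; last by apply: Gs; rewrite !inE zs !orbT.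
by apply: GI; apply: Gs; rewrite !inE eqxx ?orbT.
Qed.

Lemma is_filterP G :
  is_filter G <-> upset G /\ (forall a b, G a -> G b -> G (a `&` b)).
Proof.
split=> [[upG Gmeet]|[upG GI]]; last by split=> // x s Gs _; exact: meet_closed_nmeet.
split=> // a b Ga Gb; apply: (Gmeet a [:: b]) => [z|y [|//] _].
  by rewrite !inE => /predU1P [->|/eqP ->].
by move/(_ y (mem_head _ _)); rewrite !inE => /predU1P [->|/eqP ->].
Qed.

Lemma prime_filter0 : prime_filter (fun _ : L => False).
Proof. by split; first apply/is_filterP; split. Qed.

Lemma prime_upset_njoin F x s :
  prime_upset F -> F (njoin x s) -> exists2 z, z \in x :: s & F z.
Proof.
rewrite /njoin => -[_ pF]; elim: s x => [|w s IH] x /=; first by exists x; rewrite ?mem_head.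
move=> /IH [z]; rewrite inE => /predU1P [-> /pF [Fx|Fw]|zs Fz].
- by exists x; rewrite ?mem_head.
- by exists w; rewrite // !inE eqxx orbT.
- by exists z; rewrite // !inE zs !orbT.
Qed.

Lemma union_prime_upset k (G : 'I_k -> L -> Prop) F :
  (forall i, prime_upset (G i)) -> union_of G F -> prime_upset F.
Proof.
move=> pG GF; split=> [a b /GF [i Gia] ab|a b /GF [i /(proj2 (pG i)) [Gia|Gib]]].
- by apply/GF; exists i; apply: (proj1 (pG i)) Gia ab.
- by left; apply/GF; exists i.
- by right; apply/GF; exists i.
Qed.

Lemma union_filters_nfilter n k (G : 'I_k -> L -> Prop) F :
  (k <= n)%N -> upset F -> (forall i, is_filter (G i)) -> union_of G F ->
  nfilter n F.
Proof.
move=> kn upF fG GF; split=> // x s Fs Fsub; apply: contrapT => nFm.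
have [f fP] : {f : 'I_k -> L & forall i, f i \in x :: s /\ ~ G i (f i)}.
  apply: (@choice _ _ (fun i z => z \in x :: s /\ ~ G i z)) => i.
  have [_ GI] := (is_filterP (G i)).1 (fG i).
  have /existsPNP [z zs nGz] : ~ {in x :: s, forall z, G i z}.
    by move=> Gs; apply: nFm; apply/GF; exists i; exact: meet_closed_nmeet.
  by exists z.
case E: [seq f i | i <- enum 'I_k] => [|y t].
  have [i _] := proj1 (GF x) (Fs x (mem_head _ _)).
  move/(congr1 size): E; rewrite size_map size_enum_ord => /= k0.
  by case: i; rewrite k0.
have /GF [i Gi] : F (nmeet y t).
  apply: Fsub; first by rewrite -E size_map size_enum_ord.
  by move=> z; rewrite -E => /mapP [i _ ->]; case: (fP i).
have [_ nGfi] := fP i; apply: nGfi; apply: (fG i).1 Gi _.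
by apply: nmeet_lb; rewrite -E map_f ?mem_enum.
Qed.

Lemma prime_union_filters_prime_nfilter n F :
  prime_upset F /\ (exists k (G : 'I_k -> L -> Prop),
    (k <= n)%N /\ (forall i, is_filter (G i)) /\ union_of G F) ->
  prime_nfilter n F.
Proof.
by case=> pF [k [G [kn [fG GF]]]]; split=> //; exact: union_filters_nfilter kn pF.1 fG GF.
Qed.

Lemma union_prime_filters_prime_union_filters n F :
  (exists k (G : 'I_k -> L -> Prop),
    (k <= n)%N /\ (forall i, prime_filter (G i)) /\ union_of G F) ->
  prime_upset F /\ (exists k (G : 'I_k -> L -> Prop),
    (k <= n)%N /\ (forall i, is_filter (G i)) /\ union_of G F).
Proof.
case=> k [G [kn [pG GF]]]; split; first exact: (union_prime_upset (fun i => (pG i).2) GF).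
by exists k, G; split=> //; split=> // i; case: (pG i).
Qed.

Lemma prime_filters_hom n (G : 'I_n -> L -> Prop) :
  (forall i, prime_filter (G i)) ->
  lattice_hom_to_2n (fun a => [set i | `[< G i a >]]).
Proof.
move=> pG a b; split; apply/setP => i; rewrite !inE.
all: have [/is_filterP [upG GI] [_ GU]] := pG i.
- apply/asboolP/andP => [Gab|[/asboolP Ga /asboolP Gb]]; last exact: GI.
  by split; apply/asboolP; apply: upG Gab _; rewrite ?leIl ?leIr.
- apply/asboolP/orP => [/GU [Ga|Gb]|[/asboolP Ga|/asboolP Gb]].
  + by left; apply/asboolP.
  + by right; apply/asboolP.
  + by apply: upG Ga _; rewrite leUl.
  + by apply: upG Gb _; rewrite leUr.
Qed.

(* The family is padded with empty filters, which are prime. *)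
Lemma union_prime_filters_hom n k (G : 'I_k -> L -> Prop) F :
  (k <= n)%N -> (forall i, prime_filter (G i)) -> union_of G F ->
  exists h : L -> {set 'I_n},
    lattice_hom_to_2n h /\ forall a, F a <-> P_n (h a).
Proof.
move=> kn pG GF.
pose G' (i : 'I_n) := if insub (val i) is Some j then G j else fun _ => False.
have pG' i : prime_filter (G' i).
  by rewrite /G'; case: insub => [j|]; [exact: pG|exact: prime_filter0].
exists (fun a => [set i | `[< G' i a >]]); split; first exact: prime_filters_hom.
move=> a; rewrite GF /P_n; split=> [[j Gj]|/set0Pn [i]].
  by apply/set0Pn; exists (widen_ord kn j); rewrite inE /G' /= valK; apply/asboolP.
by rewrite inE /G' => /asboolP; case: insub => // j Gj; exists j.
Qed.

Lemma hom_union_prime_filters n (h : L -> {set 'I_n}) F :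
  lattice_hom_to_2n h -> (forall a, F a <-> P_n (h a)) ->
  exists k (G : 'I_k -> L -> Prop),
    (k <= n)%N /\ (forall i, prime_filter (G i)) /\ union_of G F.
Proof.
move=> hh hF; exists n, (fun i a => i \in h a); split=> //; split=> [i|a].
  have upI : upset (fun a => i \in h a).
    by move=> a b ha /join_idPr <-; have [_ ->] := hh a b; rewrite inE ha.
  split; first by apply/is_filterP; split=> // a b ha hb; have [-> _] := hh a b; rewrite inE ha hb.
  by split=> // a b; have [_ ->] := hh a b; rewrite inE => /orP [] ?; [left|right].
by rewrite hF /P_n; split=> [/set0Pn|] [i]; [|move=> ?; apply/set0Pn]; exists i.
Qed.

Definition disjoint_family F s : Prop :=
  [/\ uniq s, {in s, forall x, F x} & {in s &, forall x y, x != y -> ~ F (x `&` y)}].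

Lemma disjoint_family_sub F s t :
  uniq t -> {subset t <= s} -> disjoint_family F s -> disjoint_family F t.
Proof. by move=> ut ts [_ Fs dj]; split=> // [x /ts /Fs|x y /ts xs /ts ys]; [|exact: dj]. Qed.

Lemma disjoint_family_cons F s x :
  disjoint_family F s -> F x -> {in s, forall a, ~ F (x `&` a)} ->
  disjoint_family F (x :: s).
Proof.
move=> [us Fs dj] Fx dx; split.
- by rewrite /= us andbT; apply/negP => /dx; rewrite meetxx.
- by move=> z; rewrite inE => /predU1P [->|/Fs].
- move=> a b; rewrite !inE => /predU1P [->|as_] /predU1P [->|bs]; rewrite ?eqxx //.
  + by move=> _; exact: dx.
  + by move=> _; rewrite meetC; exact: dx.
  + exact: dj.
Qed.

End LatticeFacts.

Section DistributiveLattice.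
Context {d : Order.disp_t} {L : distrLatticeType d}.
Implicit Types (F : L -> Prop) (a b x y z : L) (s : seq L).

Lemma meet_njoin y x s : y `&` njoin x s = njoin (y `&` x) [seq y `&` z | z <- s].
Proof. by rewrite /njoin; elim: s x => [|w s IH] x //=; rewrite IH meetUr. Qed.

Lemma prime_upset_meet_njoin F y x s :
  prime_upset F -> F (y `&` njoin x s) -> exists2 z, z \in x :: s & F (y `&` z).
Proof.
move=> pF; rewrite meet_njoin => /(prime_upset_njoin pF) [w wm Fw].
have /mapP [z zs wz] : w \in [seq y `&` z | z <- x :: s] by [].
by exists z; rewrite -?wz.
Qed.

(* In a prime n-filter, at most n elements can have pairwise meets outside F:
   for n + 1 such elements a_i, the joins c_j of all a_i with i <> j lie in F,
   any n of them lie above a common a_i, so their meet M lies in F; but then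
   primality applied twice to M <= c_j yields i <> j with a_i /\ a_j in F. *)
Section CoJoin.
Variables (F : L -> Prop) (s : seq L).
Hypotheses (pF : prime_upset F) (dF : disjoint_family F s) (s_gt1 : (1 < size s)%N).

Let cojoin a := njoin (head a (rem a s)) (rem a s).

Let cojoin_support a : a \in s -> {subset head a (rem a s) :: rem a s <= rem a s}.
Proof.
move=> as_ z; rewrite inE => /predU1P [->|//]; move: (size_rem as_).
by case: (rem a s) => [|b t] /=; [case: (size s) s_gt1 => [|[]]|rewrite mem_head].
Qed.

Let mem_rem_disjoint a b : b \in rem a s -> b \in s /\ b != a.
Proof. by case: dF => us _ _; rewrite mem_rem_uniq // inE => /andP []. Qed.

Lemma cojoinF a : a \in s -> F (cojoin a).
Proof.
case: dF pF => _ Fs _ [upF _] as_; have bs := mem_rem (cojoin_support as_ (mem_head _ _)).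
by apply: upF (Fs _ bs) _; apply/njoin_ub/mem_head.
Qed.

Lemma cojoin_split a y :
  a \in s -> F (y `&` cojoin a) -> exists2 b, b \in s & b != a /\ F (y `&` b).
Proof.
move=> as_ /(prime_upset_meet_njoin pF) [b /(cojoin_support as_) /mem_rem_disjoint].
by case=> bs ba Fb; exists b.
Qed.

Lemma le_cojoin a b : b \in s -> b != a -> b <= cojoin a.
Proof.
case: dF => us _ _ bs ba; apply: njoin_ub.
by rewrite inE mem_rem_uniq // inE ba bs orbT.
Qed.

Lemma cojoin_lb_notF y : {in s, forall a, y <= cojoin a} -> ~ F y.
Proof.
case: dF pF => _ _ dj [upF _] ylb Fy.
have a0s : head y s \in s by case: (s) s_gt1 => // ? ?; rewrite mem_head.
have [a1 a1s [_ F1]] : exists2 a1, a1 \in s & a1 != head y s /\ F (y `&` a1).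
  by apply: (cojoin_split a0s); rewrite (meet_idPl (ylb _ a0s)).
have [a2 a2s [a21 F2]] : exists2 a2, a2 \in s & a2 != a1 /\ F (y `&` a1 `&` a2).
  by apply: (cojoin_split a1s); rewrite (meet_idPl _) // (le_trans (leIl _ _) (ylb _ a1s)).
apply: (dj a2 a1) => //; apply: upF F2 _.
by rewrite meetC leI2 // leIr.
Qed.

Lemma disjoint_family_not_nfilter : ~ nfilter (size s).-1 F.
Proof.
case=> _ Fmeet; case: dF pF => us Fs _ [upF _].
case E: s s_gt1 => [//|x s0] _; apply: (@cojoin_lb_notF (nmeet (cojoin x) (map cojoin s0))).
  by move=> a as_; apply: nmeet_lb; rewrite -map_cons -E map_f.
apply: Fmeet => [z|y t size_yt sub_yt].
  by rewrite -map_cons -E => /mapP [a as_ ->]; exact: cojoinF.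
have [u size_u yt_u] :=
  preimage_subseq (sub_yt : {subset y :: t <= map cojoin (x :: s0)}).
have /allPn [b bs bu] : ~~ all (mem u) s.
  apply/negP => /allP su; have := uniq_leq_size us su.
  by move: size_yt; rewrite size_u E /= => le_ts; rewrite ltnNge le_ts.
apply: upF (Fs b bs) _; rewrite le_nmeet; apply/allP => z /yt_u /mapP [a au ->].
by apply: le_cojoin => //; apply: contraNneq bu => ->.
Qed.

End CoJoin.

Lemma disjoint_family_size n F s :
  (0 < n)%N -> prime_nfilter n F -> disjoint_family F s -> (size s <= n)%N.
Proof.
move=> n0 [nF pF] ds; rewrite leqNgt; apply/negP => ns.
have [us _ _] := ds.
have dt := disjoint_family_sub (take_uniq n.+1 us) (@mem_take _ _ _) ds.
have st : size (take n.+1 s) = n.+1 by rewrite size_takel.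
by apply: (disjoint_family_not_nfilter pF dt); rewrite st.
Qed.

Section MaximalFamily.
Variables (F : L -> Prop) (s : seq L).
Hypotheses (pF : prime_upset F) (dF : disjoint_family F s).
Hypothesis maxs : forall t, disjoint_family F t -> (size t <= size s)%N.

Lemma maximal_family_meet a u z :
  a \in s -> F (u `&` a) -> F (z `&` a) -> F (u `&` z `&` a).
Proof.
case: dF pF => us Fs dj [upF _] as_ Fu Fz; apply: contrapT => nFuz.
have nFa w : w \in rem a s -> ~ F (a `&` w).
  by rewrite mem_rem_uniq // inE => /andP [wa ws]; apply: dj; rewrite // eq_sym.
have below_a x w : w \in rem a s -> ~ F ((x `&` a) `&` w).
  by move=> /nFa nFaw Fxaw; apply: nFaw; apply: upF Fxaw _; rewrite leI2 ?leIr.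
have drem := disjoint_family_sub (rem_uniq a us) (@mem_rem _ a s) dF.
have dq := disjoint_family_cons drem Fz (below_a z).
have dpq : disjoint_family F (u `&` a :: z `&` a :: rem a s).
  apply: disjoint_family_cons dq Fu _ => w; rewrite inE => /predU1P [->|/below_a //].
  by rewrite meetACA meetxx.
have s_gt0 : (0 < size s)%N by case: (s) as_.
by move: (maxs dpq); rewrite /= size_rem // prednK // ltnn.
Qed.

Lemma maximal_family_prime_filter a : a \in s -> prime_filter (fun x => F (x `&` a)).
Proof.
case: pF => upF primeF as_; have upG : upset (fun x => F (x `&` a)).
  by move=> x y Fx xy; apply: upF Fx _; rewrite leI2.
split; first by apply/is_filterP; split=> // x y; exact: maximal_family_meet.
by split=> // x y; rewrite meetUl; exact: primeF.
Qed.

Lemma maximal_family_cover x : F x -> exists2 a, a \in s & F (x `&` a).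
Proof.
move=> Fx; apply: contrapT => nx.
have dx : disjoint_family F (x :: s).
  by apply: disjoint_family_cons => // a as_ Fxa; apply: nx; exists a.
by move: (maxs dx); rewrite ltnn.
Qed.

End MaximalFamily.

Lemma exists_maximal_family n F :
  (0 < n)%N -> prime_nfilter n F ->
  exists2 s, disjoint_family F s & forall t, disjoint_family F t -> (size t <= size s)%N.
Proof.
move=> n0 pnF; pose P m := `[< exists2 s, disjoint_family F s & size s = m >].
have P0 : exists m, P m by exists 0%N; apply/asboolP; exists [::].
have Pn m : P m -> (m <= n)%N by move/asboolP => [s ds <-]; exact: disjoint_family_size ds.
case: (ex_maxnP P0 Pn) => m /asboolP [s ds sm] maxm; exists s => // t dt.
by rewrite sm; apply: maxm; apply/asboolP; exists t.
Qed.

Lemma prime_nfilter_union_prime_filters n F :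
  (0 < n)%N -> prime_nfilter n F ->
  exists k (G : 'I_k -> L -> Prop),
    (k <= n)%N /\ (forall i, prime_filter (G i)) /\ union_of G F.
Proof.
move=> n0 pnF; have [_ pF] := pnF; have [s ds maxs] := exists_maximal_family n0 pnF.
exists (size s), (fun i x => F (x `&` tnth (in_tuple s) i)).
split; first exact: disjoint_family_size pnF ds.
split=> [i|x]; first exact: maximal_family_prime_filter (mem_tnth _ _).
split=> [/(maximal_family_cover ds maxs) [a /(tnthP (in_tuple s)) [i ->]]|[i Fxi]].
  by exists i.
by apply: pF.1 Fxi _; exact: leIl.
Qed.

End DistributiveLattice.

Theorem mainTheorem5 (d : Order.disp_t) (L : distrLatticeType d) (n : nat)
  (F : L -> Prop) :
  (0 < n)%N -> upset F ->
  (prime_nfilter n F <->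
     (prime_upset F /\
      exists k (G : 'I_k -> L -> Prop),
        (k <= n)%N /\ (forall i, is_filter (G i)) /\ union_of G F)) /\
  (prime_nfilter n F <->
     exists k (G : 'I_k -> L -> Prop),
       (k <= n)%N /\ (forall i, prime_filter (G i)) /\ union_of G F) /\
  (prime_nfilter n F <->
     exists h : L -> {set 'I_n},
       lattice_hom_to_2n h /\ forall a : L, F a <-> P_n (h a)).
Proof.
move=> n0 _.
have i_iii := prime_nfilter_union_prime_filters n0.
have iii_ii := @union_prime_filters_prime_union_filters _ _ n F.
have ii_i := @prime_union_filters_prime_nfilter _ _ n F.
split; [|split]; split.
- by move/i_iii/iii_ii.
- exact: ii_i.
- exact: i_iii.
- by move/iii_ii/ii_i.
- by move/i_iii => [k [G [kn [pG GF]]]]; exact: union_prime_filters_hom kn pG GF.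
- by case=> h [hh hF]; apply/ii_i/iii_ii; exact: hom_union_prime_filters hh hF.
Qed.
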